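(* Let $a\in\mathbb{R}$, $w\in\mathbb{C}\setminus\mathbb{R}$ with $\varphi := |\operatorname{Arg}(w)|\in(\pi/2,\pi)$, and $\tau>0$. Then all roots of $z + a - we^{-\tau z} = 0$ have negative real parts if and only if one of the following holds: (i) $a \ge 0$ and $|w| < \frac{1}{\tau}R_2(-\tau a;\varphi)$; (ii) $-\frac{1}{\tau}M(\varphi) < a < 0$ and $\frac{1}{\tau}R_1(-\tau a;\varphi) < |w| < \frac{1}{\tau}R_2(-\tau a;\varphi)$.
   Context: $\operatorname{Arg}(w)\in(-\pi,\pi]$ is the principal argument. For $\varphi\in(\pi/2,\pi)$: $C(\theta;\varphi) := \theta\cot(\theta-\varphi)$ on $[0,\varphi)$; $S(\varphi)\in(0,\varphi)$ is the unique solution of $\sin(2\theta-2\varphi)=2\theta$; $C(\cdot;\varphi)$ is strictly increasing on $[0,S(\varphi)]$ and strictly decreasing on $[S(\varphi),\varphi)$ with maximum $M(\varphi) := \cos^2(S(\varphi)-\varphi)$, $C(0;\varphi)=0$, and $C(\theta;\varphi)\to-\infty$ as $\theta\uparrow\varphi$. $C_1^{-1}(\cdot;\varphi):[0,M(\varphi)]\to[0,S(\varphi)]$ and $C_2^{-1}(\cdot;\varphi):(-\infty,M(\varphi)]\to[S(\varphi),\varphi)$ are the inverses of the restrictions of $C(\cdot;\varphi)$ to $[0,S(\varphi)]$ and $[S(\varphi),\varphi)$. $R_j(r;\varphi) := -C_j^{-1}(r;\varphi)/\sin(C_j^{-1}(r;\varphi)-\varphi)$ for $j=1,2$. *)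

From Stdlib Require Import Reals Lra ClassicalEpsilon.
From Coquelicot Require Import Coquelicot.
Open Scope R_scope.

Definition Cexp (z : C) : C :=
  (exp (Re z) * cos (Im z), exp (Re z) * sin (Im z)).

Definition Arg (w : C) : R :=
  if Rlt_dec (Im w) 0 then - acos (Re w / Cmod w) else acos (Re w / Cmod w).

(* choice of an element satisfying P (the paper's "the unique ...") *)
Definition choose (P : R -> Prop) : R := epsilon (inhabits 0) P.

Definition Cfun (theta phi : R) : R := theta * cos (theta - phi) / sin (theta - phi).

Definition Sphi (phi : R) : R :=
  choose (fun t => 0 < t < phi /\ sin (2 * t - 2 * phi) = 2 * t).

Definition Mphi (phi : R) : R := (cos (Sphi phi - phi)) ^ 2.

Definition C1inv (r phi : R) : R :=
  choose (fun t => 0 <= t <= Sphi phi /\ Cfun t phi = r).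
Definition C2inv (r phi : R) : R :=
  choose (fun t => Sphi phi <= t < phi /\ Cfun t phi = r).

Definition Rfun1 (r phi : R) : R := - C1inv r phi / sin (C1inv r phi - phi).
Definition Rfun2 (r phi : R) : R := - C2inv r phi / sin (C2inv r phi - phi).

From Stdlib Require Import Reals.
From Coquelicot Require Import Coquelicot.
From Stdlib Require Import Lra ClassicalEpsilon Ranalysis5 Classical.
Open Scope R_scope.

(* Writing X = tau Re z, t = +-tau Im z (sign of Im w), b = tau a and r = tau |w|,
   a root becomes a solution of the real system
       X + b = r e^{-X} cos(phi - t),   t = r e^{-X} sin(phi - t)      (char_system).
   Put x = X + b: the point (x, |t|) then has modulus r e^{-X} and polar angle at
   least phi - |t|.  The boundary of the region where this is possible
   with X >= 0 is described by the curve C(t; phi) = t cot(t - phi): on the level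
   set C(t) = -x the point (x, t) has angle exactly phi - t and modulus
   R(t) = -t / sin(t - phi).  The key monotone quantity is G(t) = R(t) e^{-C(t)},
   which increases strictly on [0, phi) from 0 to +oo. *)

Lemma strict_incr_of_deriv (f f' : R -> R) a b :
  (forall c, a <= c <= b -> derivable_pt_lim f c (f' c)) ->
  (forall c, a < c < b -> 0 < f' c) ->
  forall x y, a <= x -> x < y -> y <= b -> f x < f y.
Proof.
  intros Hd Hpos x y Hx Hxy Hy.
  destruct (MVT_cor2 f f' x y Hxy) as [c [Hc Hfc]].
  { intros c Hc; apply Hd; lra. }
  assert (0 < f' c * (y - x)) by (apply Rmult_lt_0_compat; [apply Hpos|]; lra).
  lra.
Qed.

Lemma strict_decr_of_deriv (f f' : R -> R) a b :
  (forall c, a <= c <= b -> derivable_pt_lim f c (f' c)) ->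
  (forall c, a < c < b -> f' c < 0) ->
  forall x y, a <= x -> x < y -> y <= b -> f y < f x.
Proof.
  intros Hd Hneg x y Hx Hxy Hy.
  enough (- f x < - f y) by lra.
  apply (strict_incr_of_deriv (fun t => - f t) (fun t => - f' t) a b); auto.
  - intros c Hc. apply (derivable_pt_lim_opp f), Hd, Hc.
  - intros c Hc. specialize (Hneg c Hc). lra.
Qed.

Lemma continuity_of_deriv f x l : derivable_pt_lim f x l -> continuity_pt f x.
Proof. intro H. apply derivable_continuous_pt. exists l. exact H. Qed.

Lemma IVT_closed (f : R -> R) a b y :
  a <= b -> (forall c, a <= c <= b -> continuity_pt f c) ->
  f a <= y -> y <= f b -> exists z, a <= z <= b /\ f z = y.
Proof.
  intros Hab Hc Ha Hb.
  destruct (Req_dec (f a) y) as [E|E]; [exists a; split; [lra|exact E]|].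
  destruct (Req_dec (f b) y) as [E'|E']; [exists b; split; [lra|exact E']|].
  assert (Hlt : a < b) by (destruct (Req_dec a b) as [->|]; lra).
  destruct (IVT_interv (fun x => f x - y) a b) as [z [Hz Hfz]]; try lra.
  - intros c Hc'. apply continuity_pt_minus; [apply Hc; lra|apply continuity_pt_const].
    intros u v; reflexivity.
  - exists z; split; lra.
Qed.

(* For y > 0, polar_angle x y is the argument, in (0, PI), of the point (x, y). *)
Definition polar_angle (x y : R) : R := PI / 2 - atan (x / y).

Lemma polar_angle_bound x y : 0 < polar_angle x y < PI.
Proof. unfold polar_angle. destruct (atan_bound (x / y)). lra. Qed.

Lemma sqrt_sum_squares x y : 0 < y -> sqrt (x ^ 2 + y ^ 2) = y * sqrt (1 + (x / y) ^ 2).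
Proof.
  intro Hy. replace (x ^ 2 + y ^ 2) with ((y * y) * (1 + (x / y) ^ 2)) by (field; lra).
  assert (0 <= (x / y) ^ 2) by apply pow2_ge_0.
  rewrite sqrt_mult by nra. rewrite sqrt_square; lra.
Qed.

Lemma polar_angle_cos_sin x y : 0 < y ->
  cos (polar_angle x y) = x / sqrt (x ^ 2 + y ^ 2) /\
  sin (polar_angle x y) = y / sqrt (x ^ 2 + y ^ 2).
Proof.
  intro Hy. unfold polar_angle.
  rewrite cos_shift, sin_shift, sin_atan, cos_atan, sqrt_sum_squares by auto.
  assert (0 < sqrt (1 + (x / y)²)) by (apply sqrt_lt_R0; pose proof (Rle_0_sqr (x / y)); lra).
  unfold Rsqr in *. replace ((x / y) ^ 2) with (x / y * (x / y)) by ring.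
  split; field; lra.
Qed.

Lemma cos_sin_eq_period u v : cos u = cos v -> sin u = sin v ->
  exists k : Z, u = v + 2 * IZR k * PI.
Proof.
  intros Hc Hs.
  assert (H1 : cos (u - v) = 1).
  { rewrite cos_minus, Hc, Hs. assert (H := sin2_cos2 v). unfold Rsqr in H. lra. }
  replace (u - v) with (2 * ((u - v) / 2)) in H1 by field. rewrite cos_2a_sin in H1.
  assert (H2 : sin ((u - v) / 2) = 0) by nra.
  destruct (sin_eq_0_0 _ H2) as [k Hk]. exists k. lra.
Qed.

Lemma polar_representation x y u rho : 0 < y -> 0 < rho ->
  x = rho * cos u -> y = rho * sin u -> rho = sqrt (x ^ 2 + y ^ 2) ->
  exists k : Z, u = polar_angle x y + 2 * IZR k * PI.
Proof.
  intros Hy Hrho Hx Hy' Hr. destruct (polar_angle_cos_sin x y Hy) as [Hc Hs].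
  apply cos_sin_eq_period; rewrite ?Hc, ?Hs, <- Hr, ?Hx, ?Hy'; field; lra.
Qed.

(* y |-> y + polar_angle x y is convex for x < 0 (its derivative 1 + x / (y^2 + x^2)
   increases with y), so it cannot exceed at an interior point a bound
   it respects at the two endpoints. *)
Lemma angle_sum_deriv x c : 0 < c ->
  derivable_pt_lim (fun y => y + polar_angle x y) c (1 + x / (c ^ 2 + x ^ 2)).
Proof.
  intro Hc. apply is_derive_Reals. unfold polar_angle. auto_derive; [lra|].
  assert (0 < c * c) by nra. assert (0 <= x * x) by nra.
  replace (1 + x * / c * (x * / c * 1)) with ((c * c + x * x) / (c * c)) by (field; lra).
  field. split; lra.
Qed.

Lemma angle_sum_convex x y1 y y2 p : x < 0 -> 0 < y1 -> y1 < y -> y < y2 ->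
  y1 + polar_angle x y1 <= p -> y2 + polar_angle x y2 <= p -> y + polar_angle x y < p.
Proof.
  intros Hx H1 H2 H3 Hh1 Hh2.
  destruct (Rlt_le_dec (y + polar_angle x y) p) as [|Hc]; [auto|exfalso].
  destruct (MVT_cor2 (fun y => y + polar_angle x y) (fun c => 1 + x / (c ^ 2 + x ^ 2)) y1 y H2)
    as [c1 [Hc1 Hc1']]; [intros c Hcc; apply angle_sum_deriv; lra|].
  destruct (MVT_cor2 (fun y => y + polar_angle x y) (fun c => 1 + x / (c ^ 2 + x ^ 2)) y y2 H3)
    as [c2 [Hc2 Hc2']]; [intros c Hcc; apply angle_sum_deriv; lra|].
  assert (D1 : 0 <= 1 + x / (c1 ^ 2 + x ^ 2)).
  { destruct (Rlt_le_dec (1 + x / (c1 ^ 2 + x ^ 2)) 0); [nra|auto]. }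
  assert (D2 : 1 + x / (c2 ^ 2 + x ^ 2) <= 0).
  { destruct (Rlt_le_dec 0 (1 + x / (c2 ^ 2 + x ^ 2))); [nra|auto]. }
  assert (Hmono : x / (c1 ^ 2 + x ^ 2) < x / (c2 ^ 2 + x ^ 2)).
  { assert (0 < c1 ^ 2 + x ^ 2) by nra. assert (0 < c2 ^ 2 + x ^ 2) by nra.
    assert (c1 ^ 2 < c2 ^ 2) by nra.
    enough (0 < x / (c2 ^ 2 + x ^ 2) - x / (c1 ^ 2 + x ^ 2)) by lra.
    replace (x / (c2 ^ 2 + x ^ 2) - x / (c1 ^ 2 + x ^ 2)) with
      ((- x) * (c2 ^ 2 - c1 ^ 2) / ((c1 ^ 2 + x ^ 2) * (c2 ^ 2 + x ^ 2))) by (field; lra).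
    apply Rdiv_lt_0_compat; nra. }
  lra.
Qed.

Section Fixed_angle.

Variable phi : R.
Hypothesis Hphi : PI / 2 < phi < PI.

Lemma sin_shift_neg t : 0 <= t < phi -> sin (t - phi) < 0.
Proof. intro Ht. apply sin_lt_0_var; lra. Qed.

(* Residual of the equation sin(2t - 2 phi) = 2 t defining S(phi);
   it is strictly decreasing, positive at 0 and negative at phi. *)
Definition Sres (t : R) : R := sin (2 * t - 2 * phi) - 2 * t.

Lemma Sres_deriv c : derivable_pt_lim Sres c (2 * cos (2 * c - 2 * phi) - 2).
Proof. apply is_derive_Reals. unfold Sres. auto_derive; auto. unfold Rminus. ring. Qed.

Lemma Sres_decr x y : 0 <= x -> x < y -> y <= phi -> Sres y < Sres x.
Proof.
  apply (strict_decr_of_deriv Sres (fun c => 2 * cos (2 * c - 2 * phi) - 2) 0 phi).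
  - intros c _; apply Sres_deriv.
  - intros c Hc. replace (2 * c - 2 * phi) with (2 * (c - phi)) by ring.
    rewrite cos_2a_sin. assert (sin (c - phi) < 0) by (apply sin_shift_neg; lra). nra.
Qed.

Lemma Sphi_spec : 0 < Sphi phi < phi /\ Sres (Sphi phi) = 0.
Proof.
  assert (Hspec : 0 < Sphi phi < phi /\ sin (2 * Sphi phi - 2 * phi) = 2 * Sphi phi).
  { unfold Sphi, choose. apply epsilon_spec.
    assert (H0 : 0 < Sres 0).
    { unfold Sres. replace (2 * 0 - 2 * phi) with (- (2 * phi)) by ring.
      rewrite sin_neg, sin_2a.
      assert (0 < sin phi) by (apply sin_gt_0; lra).
      assert (cos phi < 0) by (apply cos_lt_0; lra). nra. }
    assert (H1 : Sres phi < 0).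
    { unfold Sres. replace (2 * phi - 2 * phi) with 0 by ring. rewrite sin_0; lra. }
    destruct (IVT_closed (fun t => - Sres t) 0 phi 0) as [z [Hz Hfz]]; try lra.
    - intros c _. apply continuity_pt_opp, (continuity_of_deriv _ _ _ (Sres_deriv c)).
    - exists z. assert (z <> 0) by (intro; subst; lra).
      assert (z <> phi) by (intro; subst; lra). unfold Sres in Hfz. split; lra. }
  destruct Hspec as [HS HSeq]. split; [exact HS|]. unfold Sres; lra.
Qed.

Lemma Sres_pos c : 0 <= c < Sphi phi -> 0 < Sres c.
Proof. intro Hc. destruct Sphi_spec as [HS HSeq]. rewrite <- HSeq. apply Sres_decr; lra. Qed.

Lemma Sres_neg c : Sphi phi < c <= phi -> Sres c < 0.
Proof. intro Hc. destruct Sphi_spec as [HS HSeq]. rewrite <- HSeq. apply Sres_decr; lra. Qed.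

(* The derivative of C(.; phi); its sign is the sign of Sres. *)
Definition Cder (c : R) : R :=
  (cos (c - phi) - c * sin (c - phi)) / sin (c - phi)
  - c * cos (c - phi) * cos (c - phi) / (sin (c - phi) * sin (c - phi)).

Lemma Cfun_deriv c : 0 <= c < phi -> derivable_pt_lim (fun t => Cfun t phi) c (Cder c).
Proof.
  intro Hc. assert (Hs := sin_shift_neg c Hc).
  apply is_derive_Reals. unfold Cfun, Cder. auto_derive.
  - unfold Rminus in Hs; lra.
  - unfold Rminus. field. unfold Rminus in Hs; lra.
Qed.

Lemma Cder_sin2 c : sin (c - phi) <> 0 -> Cder c * (sin (c - phi) * sin (c - phi)) = Sres c / 2.
Proof.
  intro Hs. unfold Sres. replace (2 * c - 2 * phi) with (2 * (c - phi)) by ring.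
  rewrite sin_2a. assert (H := sin2_cos2 (c - phi)). unfold Rsqr in H.
  transitivity (cos (c - phi) * sin (c - phi)
                - c * (sin (c - phi) * sin (c - phi) + cos (c - phi) * cos (c - phi))).
  - unfold Cder; field; auto.
  - rewrite H. field.
Qed.

Lemma Cder_pos c : 0 <= c < Sphi phi -> 0 < Cder c.
Proof.
  intro Hc. destruct Sphi_spec as [HS _].
  assert (Hs : sin (c - phi) < 0) by (apply sin_shift_neg; lra).
  assert (H := Cder_sin2 c ltac:(lra)). assert (H3 := Sres_pos c Hc). nra.
Qed.

Lemma Cder_neg c : Sphi phi < c < phi -> Cder c < 0.
Proof.
  intro Hc. destruct Sphi_spec as [HS _].
  assert (Hs : sin (c - phi) < 0) by (apply sin_shift_neg; lra).
  assert (H := Cder_sin2 c ltac:(lra)). assert (H3 := Sres_neg c ltac:(lra)). nra.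
Qed.

Lemma Cfun_incr x y : 0 <= x -> x < y -> y <= Sphi phi -> Cfun x phi < Cfun y phi.
Proof.
  destruct Sphi_spec as [HS _].
  apply (strict_incr_of_deriv (fun t => Cfun t phi) Cder 0 (Sphi phi)).
  - intros c Hc. apply Cfun_deriv; lra.
  - intros c Hc. apply Cder_pos; lra.
Qed.

Lemma Cfun_decr x y : Sphi phi <= x -> x < y -> y < phi -> Cfun y phi < Cfun x phi.
Proof.
  intros Hx Hxy Hy. destruct Sphi_spec as [HS _].
  apply (strict_decr_of_deriv (fun t => Cfun t phi) Cder (Sphi phi) y); try lra.
  - intros c Hc. apply Cfun_deriv; lra.
  - intros c Hc. apply Cder_neg; lra.
Qed.

Lemma Cfun_cont c : 0 <= c < phi -> continuity_pt (fun t => Cfun t phi) c.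
Proof. intro Hc. exact (continuity_of_deriv _ _ _ (Cfun_deriv c Hc)). Qed.

Lemma Cfun_0 : Cfun 0 phi = 0.
Proof. unfold Cfun, Rdiv. ring. Qed.

Lemma Cfun_Sphi : Cfun (Sphi phi) phi = Mphi phi.
Proof.
  destruct Sphi_spec as [HS HSeq]. unfold Sres in HSeq.
  assert (Hs : sin (Sphi phi - phi) < 0) by (apply sin_shift_neg; lra).
  replace (2 * Sphi phi - 2 * phi) with (2 * (Sphi phi - phi)) in HSeq by ring.
  rewrite sin_2a in HSeq.
  unfold Mphi, Cfun.
  replace (Sphi phi) with (sin (Sphi phi - phi) * cos (Sphi phi - phi)) at 1 by lra.
  field. lra.
Qed.

Lemma Cfun_le_M t : 0 <= t < phi -> Cfun t phi <= Mphi phi.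
Proof.
  intro Ht. rewrite <- Cfun_Sphi.
  destruct (Rtotal_order t (Sphi phi)) as [H|[H|H]].
  - left. apply Cfun_incr; lra.
  - subst; lra.
  - left. apply Cfun_decr; lra.
Qed.

(* M(phi) > 0, so the lower branch C1inv is defined on [0, M(phi)]. *)
Lemma Mphi_pos : 0 < Mphi phi.
Proof.
  destruct Sphi_spec as [HS _]. rewrite <- Cfun_Sphi, <- Cfun_0. apply Cfun_incr; lra.
Qed.

(* C(theta; phi) -> -oo as theta -> phi: explicitly at theta = phi - v, v small. *)
Lemma Cfun_unbounded K : exists t, Sphi phi < t < phi /\ Cfun t phi < - K.
Proof.
  destruct Sphi_spec as [HS _]. assert (HPI := PI_RGT_0).
  set (m := Rmin (Rmin (phi - Sphi phi) (PI / 3)) (phi / 2)).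
  assert (Hm1 : m <= phi - Sphi phi) by (unfold m; eapply Rle_trans; apply Rmin_l).
  assert (Hm2 : m <= PI / 3) by (unfold m; eapply Rle_trans; [apply Rmin_l|apply Rmin_r]).
  assert (Hm3 : m <= phi / 2) by (unfold m; apply Rmin_r).
  assert (Hm0 : 0 < m) by (unfold m; repeat apply Rmin_pos; lra).
  assert (HK := Rle_abs K). assert (HK0 := Rabs_pos K).
  set (v := m / (2 + 4 * Rabs K)).
  assert (Hv1 : v * (2 + 4 * Rabs K) = m) by (unfold v; field; lra).
  assert (Hv0 : 0 < v) by nra.
  assert (Hvm : 2 * v <= m) by nra.
  assert (Hsin : 0 < sin v < v) by (split; [apply sin_gt_0|apply sin_lt_x]; nra).
  assert (Hcos : 1 / 2 <= cos v).
  { rewrite <- cos_PI3. destruct (Req_dec v (PI / 3)) as [->|]; [lra|].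
    left. apply cos_decreasing_1; nra. }
  exists (phi - v). split; [nra|].
  unfold Cfun. replace (phi - v - phi) with (- v) by ring. rewrite sin_neg, cos_neg.
  assert (Hnum : phi / 4 <= (phi - v) * cos v) by nra.
  assert (Hbound : K * sin v < (phi - v) * cos v) by nra.
  apply Ropp_lt_cancel. replace (- ((phi - v) * cos v / - sin v)) with ((phi - v) * cos v / sin v)
    by (field; lra).
  apply Rmult_lt_reg_r with (sin v); [lra|]. field_simplify; lra.
Qed.

(* On the level set C = -x, a point (x, theta) of modulus R(theta) corresponds to the
   modulus r = R(theta) e^{x-b} = G(theta) e^{-b}, so G governs the admissible r. *)
Definition Rad (t : R) : R := - t / sin (t - phi).
Definition Gfun (t : R) : R := Rad t * exp (- Cfun t phi).

Definition Gder (c : R) : R :=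
  exp (- Cfun c phi) *
  ((sin (c - phi) - c * cos (c - phi)) ^ 2 + c ^ 2 * sin (c - phi) ^ 2) / (- sin (c - phi) ^ 3).

Lemma Gfun_deriv c : 0 <= c < phi -> derivable_pt_lim Gfun c (Gder c).
Proof.
  intro Hc. assert (Hs := sin_shift_neg c Hc).
  apply is_derive_Reals. unfold Gfun, Gder, Rad, Cfun. auto_derive.
  - unfold Rminus in Hs; lra.
  - unfold Rminus, Rdiv. field. unfold Rminus in Hs; lra.
Qed.

Lemma Gder_pos c : 0 <= c < phi -> 0 < Gder c.
Proof.
  intro Hc. assert (Hs := sin_shift_neg c Hc).
  unfold Gder. set (s := sin (c - phi)) in *. set (co := cos (c - phi)).
  assert (Hss : 0 < s * s) by nra.
  assert (Hden : 0 < - s ^ 3)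
    by (replace (- s ^ 3) with ((- s) * (s * s)) by ring; apply Rmult_lt_0_compat; lra).
  assert (Hnum : 0 < (s - c * co) ^ 2 + c ^ 2 * s ^ 2).
  { assert (0 <= (s - c * co) ^ 2) by apply pow2_ge_0.
    destruct (Req_dec c 0) as [->|Hc0]; simpl in *; [nra|].
    assert (0 < c * c) by nra. nra. }
  apply Rdiv_lt_0_compat; [apply Rmult_lt_0_compat; [apply exp_pos|]|]; lra.
Qed.

(* G' > 0: the numerator of Gder is a sum of squares, its denominator -sin^3 > 0. *)
Lemma Gfun_incr x y : 0 <= x -> x < y -> y < phi -> Gfun x < Gfun y.
Proof.
  intros Hx Hxy Hy. apply (strict_incr_of_deriv Gfun Gder 0 y); try lra.
  - intros c Hc. apply Gfun_deriv; lra.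
  - intros c Hc. apply Gder_pos; lra.
Qed.

Lemma Gfun_le x y : 0 <= x -> x <= y -> y < phi -> Gfun x <= Gfun y.
Proof.
  intros Hx Hxy Hy. destruct (Req_dec x y) as [->|]; [lra|]. left; apply Gfun_incr; lra.
Qed.

Lemma Gfun_cont c : 0 <= c < phi -> continuity_pt Gfun c.
Proof. intro Hc. exact (continuity_of_deriv _ _ _ (Gfun_deriv c Hc)). Qed.

(* G vanishes at 0, hence takes arbitrarily small positive values on (0, S]. *)
Lemma Gfun_small e : 0 < e -> exists t, 0 < t <= Sphi phi /\ Gfun t < e.
Proof.
  intro He. destruct Sphi_spec as [HS _].
  destruct (Gfun_cont 0 ltac:(lra) e He) as [al [Hal Hcont]].
  set (t := Rmin (al / 2) (Sphi phi)).
  assert (0 < t) by (unfold t; apply Rmin_pos; lra).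
  assert (t <= al / 2) by apply Rmin_l. assert (t <= Sphi phi) by apply Rmin_r.
  exists t. split; [lra|].
  specialize (Hcont t). simpl in Hcont. unfold R_dist in Hcont.
  assert (HG0 : Gfun 0 = 0) by (unfold Gfun, Rad, Rdiv; ring).
  rewrite HG0, !Rminus_0_r, Rabs_right in Hcont by lra.
  assert (Hle := Rle_abs (Gfun t)).
  specialize (Hcont ltac:(split; [split; [exact I|lra]|lra])). lra.
Qed.

Lemma Gfun_ge_negC t : 0 <= t < phi -> Cfun t phi <= 0 -> - Cfun t phi <= Gfun t.
Proof.
  intros Ht HC. assert (Hs := sin_shift_neg t Ht).
  assert (Hexp := exp_ineq1_le (- Cfun t phi)).
  assert (HR : - Cfun t phi <= Rad t).
  { unfold Cfun, Rad. replace (- (t * cos (t - phi) / sin (t - phi)))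
      with ((t * cos (t - phi)) * / (- sin (t - phi))) by (field; lra).
    replace (- t / sin (t - phi)) with (t * / (- sin (t - phi))) by (field; lra).
    assert (0 < / - sin (t - phi)) by (apply Rinv_0_lt_compat; lra).
    assert (Hc := COS_bound (t - phi)). apply Rmult_le_compat_r; nra. }
  unfold Gfun. nra.
Qed.

Lemma Cfun_G_extreme K : exists t, Sphi phi < t < phi /\ Cfun t phi < - K /\ K < Gfun t.
Proof.
  destruct Sphi_spec as [HS _].
  destruct (Cfun_unbounded (Rabs K)) as [t [Ht HC]].
  assert (HK := Rle_abs K). assert (HK' := Rabs_pos K).
  assert (HG := Gfun_ge_negC t ltac:(lra) ltac:(lra)).
  exists t. split; [exact Ht|split]; lra.
Qed.

Lemma C1inv_spec r : 0 <= r <= Mphi phi ->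
  0 <= C1inv r phi <= Sphi phi /\ Cfun (C1inv r phi) phi = r.
Proof.
  intro Hr. destruct Sphi_spec as [HS _].
  unfold C1inv, choose. apply epsilon_spec.
  destruct (IVT_closed (fun t => Cfun t phi) 0 (Sphi phi) r) as [z Hz]; try lra.
  - intros c Hc. apply Cfun_cont; lra.
  - rewrite Cfun_0; lra.
  - rewrite Cfun_Sphi; lra.
  - exists z; exact Hz.
Qed.

Lemma C1inv_pos r : 0 < r <= Mphi phi -> 0 < C1inv r phi.
Proof.
  intro Hr. destruct (C1inv_spec r ltac:(lra)) as [Hb HC].
  destruct (Req_dec (C1inv r phi) 0) as [E|]; [|lra].
  rewrite E, Cfun_0 in HC. lra.
Qed.

Lemma C2inv_spec r : r <= Mphi phi ->
  Sphi phi <= C2inv r phi < phi /\ Cfun (C2inv r phi) phi = r.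
Proof.
  intro Hr. destruct Sphi_spec as [HS _].
  destruct (Cfun_unbounded (- r)) as [th [Hth HCth]]. rewrite Ropp_involutive in HCth.
  unfold C2inv, choose. apply epsilon_spec.
  destruct (IVT_closed (fun t => - Cfun t phi) (Sphi phi) th (- r)) as [z [Hz HCz]]; try lra.
  - intros c Hc. apply continuity_pt_opp, Cfun_cont; lra.
  - rewrite Cfun_Sphi; lra.
  - exists z. split; lra.
Qed.

Lemma level_angle x t : 0 < t < phi -> Cfun t phi = - x -> t + polar_angle x t = phi.
Proof.
  intros Ht HC. assert (HPI := PI_RGT_0).
  assert (Hsv : 0 < sin (phi - t)) by (apply sin_gt_0; lra).
  unfold Cfun in HC. replace (t - phi) with (- (phi - t)) in HC by ring.
  rewrite sin_neg, cos_neg in HC.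
  assert (Ex : x / t = tan (PI / 2 - (phi - t))).
  { unfold tan. rewrite sin_shift, cos_shift.
    apply Rmult_eq_reg_r with t; [|lra].
    replace x with (t * cos (phi - t) / sin (phi - t))
      by (rewrite <- (Ropp_involutive x), <- HC; field; lra).
    field; lra. }
  unfold polar_angle. rewrite Ex, atan_tan by lra. ring.
Qed.

Lemma level_radius x t : 0 < t < phi -> Cfun t phi = - x -> Rad t = sqrt (x ^ 2 + t ^ 2).
Proof.
  intros Ht HC. assert (Hs : sin (t - phi) < 0) by (apply sin_shift_neg; lra).
  assert (Hpos : 0 < Rad t).
  { unfold Rad. replace (- t / sin (t - phi)) with (t / (- sin (t - phi))) by (field; lra).
    apply Rdiv_lt_0_compat; lra. }
  assert (Hsq : Rad t * Rad t = x ^ 2 + t ^ 2).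
  { unfold Rad. assert (H := sin2_cos2 (t - phi)). unfold Rsqr in H.
    unfold Cfun in HC. replace x with (- (t * cos (t - phi) / sin (t - phi))) by lra.
    field_simplify_eq; [|lra].
    transitivity (t ^ 2 * (sin (t - phi) * sin (t - phi) + cos (t - phi) * cos (t - phi)));
      [rewrite H|]; ring. }
  rewrite <- Hsq, sqrt_square; lra.
Qed.

Lemma Gfun_level x t : Cfun t phi = - x -> Gfun t = Rad t * exp x.
Proof. intro HC. unfold Gfun. rewrite HC, Ropp_involutive. reflexivity. Qed.

(* The characteristic equation in rescaled real form (X = tau Re z, t = +-tau Im z,
   b = tau a, r = tau |w|), and the rescaled stability region of the theorem. *)
Definition char_system (b r X t : R) : Prop :=
  X + b = r * exp (- X) * cos (phi - t) /\ t = r * exp (- X) * sin (phi - t).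

Definition stability_region (b r : R) : Prop :=
  (0 <= b /\ r < Rfun2 (- b) phi) \/
  (- Mphi phi < b < 0 /\ Rfun1 (- b) phi < r < Rfun2 (- b) phi).

Lemma system_polar x t rho : 0 < rho ->
  x = rho * cos (phi - t) -> t = rho * sin (phi - t) ->
  0 < Rabs t /\ rho = sqrt (x ^ 2 + Rabs t ^ 2) /\ phi <= Rabs t + polar_angle x (Rabs t).
Proof.
  intros Hr Hx Ht. assert (HPI := PI_RGT_0).
  assert (Hsq : Rabs t ^ 2 = t ^ 2) by (rewrite <- !Rsqr_pow2; symmetry; apply Rsqr_abs).
  assert (Hrho : rho = sqrt (x ^ 2 + Rabs t ^ 2)).
  { assert (H := sin2_cos2 (phi - t)). unfold Rsqr in H.
    rewrite Hsq, Hx. pattern t at 2. rewrite Ht.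
    replace ((rho * cos (phi - t)) ^ 2 + (rho * sin (phi - t)) ^ 2)
      with (rho * rho * (sin (phi - t) * sin (phi - t) + cos (phi - t) * cos (phi - t))) by ring.
    rewrite H, Rmult_1_r, sqrt_square; lra. }
  assert (Ht0 : t <> 0).
  { intro E. rewrite E, Rminus_0_r in Ht.
    assert (0 < sin phi) by (apply sin_gt_0; lra). nra. }
  assert (Hy : 0 < Rabs t) by (apply Rabs_pos_lt; exact Ht0).
  split; [exact Hy|split; [exact Hrho|]].
  destruct (polar_angle_bound x (Rabs t)) as [HA0 HA1].
  destruct (Rlt_le_dec 0 t) as [Htp|Htn].
  - rewrite Rabs_right in * by lra.
    destruct (polar_representation x t (phi - t) rho Htp Hr Hx Ht Hrho) as [k Hk].
    assert (Hk0 : (k <= 0)%Z).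
    { apply Z.lt_succ_r, lt_IZR. rewrite succ_IZR.
      destruct (Rle_lt_dec 1 (IZR k)); [nra|lra]. }
    apply IZR_le in Hk0. nra.
  - rewrite Rabs_left in * by lra.
    destruct (polar_representation x (- t) (t - phi) rho ltac:(lra) Hr) as [k Hk];
      [replace (t - phi) with (- (phi - t)) by ring; rewrite cos_neg; exact Hx
      |replace (t - phi) with (- (phi - t)) by ring; rewrite sin_neg; lra
      |exact Hrho|].
    assert (Hk0 : (k <= -1)%Z).
    { apply Z.lt_succ_r, lt_IZR. rewrite succ_IZR.
      destruct (Rle_lt_dec 0 (IZR k)); [nra|lra]. }
    apply IZR_le in Hk0. nra.
Qed.

Lemma Rad_level b t : Cfun t phi = - b -> Rad t = Gfun t * exp (- b).
Proof.
  intro HC. rewrite (Gfun_level b t HC), Rmult_assoc, <- exp_plus, Rplus_opp_r, exp_0. ring.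
Qed.

Lemma level_radius_exp x b t : 0 < t < phi -> Cfun t phi = - x ->
  sqrt (x ^ 2 + t ^ 2) * exp (x - b) = Gfun t * exp (- b).
Proof.
  intros Ht HC. rewrite (Gfun_level x t HC), <- level_radius by auto.
  unfold Rminus. rewrite exp_plus. ring.
Qed.

Lemma radius_above_upper_branch b x y r : - b <= Mphi phi -> b <= x -> 0 < y ->
  C2inv (- x) phi <= y -> r = sqrt (x ^ 2 + y ^ 2) * exp (x - b) -> Rfun2 (- b) phi <= r.
Proof.
  intros Hb Hbx Hy Hty Hr. destruct Sphi_spec as [HS _].
  destruct (C2inv_spec (- x) ltac:(lra)) as [H2 HC2].
  destruct (C2inv_spec (- b) Hb) as [H3 HC3].
  set (t2 := C2inv (- x) phi) in *. set (t3 := C2inv (- b) phi) in *.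
  assert (Ht32 : t3 <= t2).
  { destruct (Rle_lt_dec t3 t2) as [|Hlt]; [auto|].
    assert (Cfun t3 phi < Cfun t2 phi) by (apply Cfun_decr; lra). lra. }
  change (Rfun2 (- b) phi) with (Rad t3). rewrite (Rad_level b t3 HC3), Hr.
  assert (HG := Gfun_le t3 t2 ltac:(lra) Ht32 ltac:(lra)).
  assert (Hsq : sqrt (x ^ 2 + t2 ^ 2) <= sqrt (x ^ 2 + y ^ 2)) by (apply sqrt_le_1_alt; nra).
  apply Rle_trans with (Gfun t2 * exp (- b));
    [apply Rmult_le_compat_r; [left; apply exp_pos|exact HG]|].
  rewrite <- (level_radius_exp x b t2) by (auto; lra).
  apply Rmult_le_compat_r; [left; apply exp_pos|exact Hsq].
Qed.

Lemma radius_below_lower_branch b x y r : - b < Mphi phi -> b <= x -> x < 0 -> 0 < y ->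
  y <= C1inv (- x) phi -> r = sqrt (x ^ 2 + y ^ 2) * exp (x - b) -> r <= Rfun1 (- b) phi.
Proof.
  intros Hb Hbx Hx Hy Hty Hr. destruct Sphi_spec as [HS _].
  destruct (C1inv_spec (- x) ltac:(lra)) as [H2 HC2].
  assert (Ht2 := C1inv_pos (- x) ltac:(lra)).
  destruct (C1inv_spec (- b) ltac:(lra)) as [H3 HC3].
  set (t2 := C1inv (- x) phi) in *. set (t3 := C1inv (- b) phi) in *.
  assert (Ht23 : t2 <= t3).
  { destruct (Rle_lt_dec t2 t3) as [|Hlt]; [auto|].
    assert (Cfun t3 phi < Cfun t2 phi) by (apply Cfun_incr; lra). lra. }
  change (Rfun1 (- b) phi) with (Rad t3). rewrite (Rad_level b t3 HC3), Hr.
  assert (HG := Gfun_le t2 t3 ltac:(lra) Ht23 ltac:(lra)).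
  assert (Hsq : sqrt (x ^ 2 + y ^ 2) <= sqrt (x ^ 2 + t2 ^ 2)) by (apply sqrt_le_1_alt; nra).
  apply Rle_trans with (Gfun t2 * exp (- b));
    [|apply Rmult_le_compat_r; [left; apply exp_pos|exact HG]].
  rewrite <- (level_radius_exp x b t2) by (auto; lra).
  apply Rmult_le_compat_r; [left; apply exp_pos|exact Hsq].
Qed.

(* Above the upper branch the modulus
   is too large, below the lower one too small, and in between the angle condition
   fails (by monotonicity of atan when x >= 0, by convexity when x < 0). *)
Lemma stable_point_excluded b r x y : stability_region b r -> b <= x -> 0 < y ->
  r = sqrt (x ^ 2 + y ^ 2) * exp (x - b) -> phi <= y + polar_angle x y -> False.
Proof.
  intros Hreg Hbx Hy Hr Hang. destruct Sphi_spec as [HS _]. assert (HM := Mphi_pos).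
  assert (Hbm : - b <= Mphi phi) by (destruct Hreg as [[? ?]|[? ?]]; lra).
  destruct (C2inv_spec (- x) ltac:(lra)) as [H2 HC2].
  set (t2 := C2inv (- x) phi) in *.
  assert (A2 := level_angle x t2 ltac:(lra) HC2).
  destruct (Rle_lt_dec t2 y) as [Hy2|Hy2].
  { assert (Rfun2 (- b) phi <= r) by (apply (radius_above_upper_branch b x y r); auto).
    destruct Hreg as [[? ?]|[? ?]]; lra. }
  destruct (Rle_lt_dec 0 x) as [Hx0|Hx0].
  - assert (Hatan : atan (x / t2) <= atan (x / y)).
    { destruct (Req_dec x 0) as [->|Hx]; [unfold Rdiv; rewrite !Rmult_0_l; lra|].
      left. apply atan_increasing. unfold Rdiv. apply Rmult_lt_compat_l; [lra|].
      apply Rinv_lt_contravar; nra. }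
    unfold polar_angle in A2, Hang. lra.
  - destruct Hreg as [[Hb0 _]|[Hb [H1 H2']]]; [lra|].
    destruct (C1inv_spec (- x) ltac:(lra)) as [H1' HC1].
    assert (Ht1 := C1inv_pos (- x) ltac:(lra)).
    set (t1 := C1inv (- x) phi) in *.
    assert (A1 := level_angle x t1 ltac:(lra) HC1).
    destruct (Rle_lt_dec y t1) as [Hy1|Hy1].
    + assert (r <= Rfun1 (- b) phi) by (apply (radius_below_lower_branch b x y r); auto; lra).
      lra.
    + assert (y + polar_angle x y < phi) by (apply (angle_sum_convex x t1 y t2); lra).
      lra.
Qed.

Lemma char_system_stable b r X t : 0 < r -> stability_region b r -> char_system b r X t -> X < 0.
Proof.
  intros Hr Hreg [Hx Ht].
  destruct (Rlt_le_dec X 0) as [|HX]; [auto|exfalso].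
  set (rho := r * exp (- X)) in *.
  assert (Hrho : 0 < rho) by (apply Rmult_lt_0_compat; [auto|apply exp_pos]).
  destruct (system_polar (X + b) t rho Hrho Hx Ht) as [Hy [Hmod Hang]].
  apply (stable_point_excluded b r (X + b) (Rabs t) Hreg ltac:(lra) Hy); [|exact Hang].
  rewrite <- Hmod. unfold rho. rewrite Rmult_assoc, <- exp_plus.
  replace (- X + (X + b - b)) with 0 by ring. rewrite exp_0. ring.
Qed.

Lemma system_from_level b r t : 0 <= t < phi -> Gfun t = r * exp b -> Cfun t phi <= - b ->
  char_system b r (- b - Cfun t phi) t.
Proof.
  intros Ht HG HC. assert (Hs := sin_shift_neg t Ht).
  assert (E : r * exp (- (- b - Cfun t phi)) = Rad t).
  { replace (- (- b - Cfun t phi)) with (b + Cfun t phi) by ring.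
    rewrite exp_plus, <- Rmult_assoc, <- HG. unfold Gfun.
    rewrite Rmult_assoc, <- exp_plus, Rplus_opp_l, exp_0. ring. }
  unfold char_system. rewrite E. unfold Rad, Cfun.
  replace (phi - t) with (- (t - phi)) by ring. rewrite cos_neg, sin_neg.
  split; field; lra.
Qed.

Lemma unstable_solution_on b r lo hi : 0 <= lo <= hi -> hi < phi ->
  Gfun lo <= r * exp b <= Gfun hi -> (forall t, lo <= t <= hi -> Cfun t phi <= - b) ->
  exists X t, 0 <= X /\ char_system b r X t.
Proof.
  intros Hlo Hhi HG HC.
  destruct (IVT_closed Gfun lo hi (r * exp b)) as [t [Ht HGt]]; try lra.
  { intros c Hc. apply Gfun_cont; lra. }
  exists (- b - Cfun t phi), t. split; [specialize (HC t Ht); lra|].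
  apply system_from_level; [lra|exact HGt|apply HC, Ht].
Qed.

(* The three ways of leaving the stability region: b <= -M(phi) (then C <= -b
   everywhere), r >= R2(-b) (search beyond the upper branch, where C decreases),
   and b < 0 with r <= R1(-b) (search below the lower branch, where C increases). *)
Lemma unstable_far_shift b r : 0 < r -> b <= - Mphi phi ->
  exists X t, 0 <= X /\ char_system b r X t.
Proof.
  intros Hr Hb. destruct Sphi_spec as [HS _].
  assert (Hv : 0 < r * exp b) by (apply Rmult_lt_0_compat; [auto|apply exp_pos]).
  destruct (Gfun_small _ Hv) as [t1 [Ht1 HG1]].
  destruct (Cfun_G_extreme (r * exp b)) as [t2 [Ht2 [_ HG2]]].
  apply (unstable_solution_on b r t1 t2); try lra.
  intros t Ht. assert (Cfun t phi <= Mphi phi) by (apply Cfun_le_M; lra). lra.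
Qed.

Lemma unstable_large_modulus b r : - Mphi phi < b -> Rfun2 (- b) phi <= r ->
  exists X t, 0 <= X /\ char_system b r X t.
Proof.
  intros Hb Hr. destruct Sphi_spec as [HS _]. destruct (C2inv_spec (- b) ltac:(lra)) as [H3 HC3].
  set (t3 := C2inv (- b) phi) in *.
  assert (HG3 : Gfun t3 <= r * exp b).
  { rewrite (Gfun_level b t3 HC3). apply Rmult_le_compat_r; [left; apply exp_pos|exact Hr]. }
  destruct (Cfun_G_extreme (r * exp b)) as [th [Hth [_ HGh]]].
  assert (t3 <= th).
  { destruct (Rle_lt_dec t3 th) as [|Hlt]; [auto|].
    assert (Gfun th < Gfun t3) by (apply Gfun_incr; lra). lra. }
  apply (unstable_solution_on b r t3 th); try lra.
  intros t Ht. destruct (Req_dec t t3) as [->|Hne]; [lra|].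
  assert (Cfun t phi < Cfun t3 phi) by (apply Cfun_decr; lra). lra.
Qed.

Lemma unstable_small_modulus b r : - Mphi phi < b < 0 -> 0 < r <= Rfun1 (- b) phi ->
  exists X t, 0 <= X /\ char_system b r X t.
Proof.
  intros Hb Hr. destruct Sphi_spec as [HS _]. destruct (C1inv_spec (- b) ltac:(lra)) as [H3 HC3].
  assert (Ht3 := C1inv_pos (- b) ltac:(lra)).
  set (t3 := C1inv (- b) phi) in *.
  assert (HG3 : r * exp b <= Gfun t3).
  { rewrite (Gfun_level b t3 HC3). apply Rmult_le_compat_r; [left; apply exp_pos|apply Hr]. }
  assert (Hv : 0 < r * exp b) by (apply Rmult_lt_0_compat; [lra|apply exp_pos]).
  destruct (Gfun_small _ Hv) as [tl [Htl HGl]].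
  assert (tl <= t3).
  { destruct (Rle_lt_dec tl t3) as [|Hlt]; [auto|].
    assert (Gfun t3 < Gfun tl) by (apply Gfun_incr; lra). lra. }
  apply (unstable_solution_on b r tl t3); try lra.
  intros t Ht. destruct (Req_dec t t3) as [->|Hne]; [lra|].
  assert (Cfun t phi < Cfun t3 phi) by (apply Cfun_incr; lra). lra.
Qed.

Lemma char_system_unstable b r : 0 < r -> ~ stability_region b r ->
  exists X t, 0 <= X /\ char_system b r X t.
Proof.
  intros Hr Hreg.
  destruct (Rle_lt_dec b (- Mphi phi)) as [Hb|Hb]; [exact (unstable_far_shift b r Hr Hb)|].
  destruct (Rle_lt_dec (Rfun2 (- b) phi) r) as [Hr2|Hr2];
    [exact (unstable_large_modulus b r Hb Hr2)|].
  destruct (Rle_lt_dec 0 b) as [Hb0|Hb0]; [exfalso; apply Hreg; left; auto|].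
  destruct (Rlt_le_dec (Rfun1 (- b) phi) r) as [Hr1|Hr1]; [exfalso; apply Hreg; right; auto|].
  exact (unstable_small_modulus b r ltac:(lra) ltac:(lra)).
Qed.

End Fixed_angle.

Lemma cos_sin_sub_signed sg u v : sg = 1 \/ sg = -1 ->
  cos (u - sg * v) = cos u * cos v + sg * (sin u * sin v) /\
  sin (u - sg * v) = sin u * cos v - sg * (cos u * sin v).
Proof.
  intros [-> | ->].
  - rewrite Rmult_1_l, cos_minus, sin_minus. split; ring.
  - replace (u - -1 * v) with (u + v) by ring. rewrite cos_plus, sin_plus. split; ring.
Qed.

Lemma polar_form (w : C) : Im w <> 0 ->
  exists sg, (sg = 1 \/ sg = -1) /\ 0 < Cmod w /\
    Re w = Cmod w * cos (Rabs (Arg w)) /\ Im w = sg * (Cmod w * sin (Rabs (Arg w))).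
Proof.
  intro Hw. destruct w as [wx wy]. unfold Re, Im in *; simpl in *.
  assert (Hy2 : 0 < wy ^ 2) by (apply pow2_gt_0; auto).
  assert (Hx2 : 0 <= wx ^ 2) by apply pow2_ge_0.
  assert (Hm : 0 < Cmod (wx, wy)) by (unfold Cmod; simpl; apply sqrt_lt_R0; lra).
  set (m := Cmod (wx, wy)) in *.
  assert (Hm2 : m * m = wx ^ 2 + wy ^ 2) by (unfold m, Cmod; simpl; apply sqrt_sqrt; lra).
  assert (Hq : -1 <= wx / m <= 1).
  { split; apply Rmult_le_reg_r with m; auto; field_simplify; nra. }
  assert (HA : Rabs (Arg (wx, wy)) = acos (wx / m)).
  { unfold Arg, Re, Im; simpl. fold m. destruct (acos_bound (wx / m)).
    destruct (Rlt_dec wy 0); [rewrite Rabs_Ropp|]; rewrite Rabs_right; lra. }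
  rewrite HA, cos_acos, sin_acos by auto.
  assert (Hs : sqrt (1 - (wx / m)²) = Rabs wy / m).
  { replace (1 - (wx / m)²) with ((Rabs wy / m)²).
    - apply sqrt_Rsqr. apply Rdiv_le_0_compat; [apply Rabs_pos|lra].
    - unfold Rsqr.
      replace (Rabs wy / m * (Rabs wy / m)) with (Rabs wy * Rabs wy / (m * m)) by (field; lra).
      rewrite <- Rabs_mult, Rabs_right by nra. field_simplify_eq; [|lra]. nra. }
  rewrite Hs.
  destruct (Rlt_dec wy 0) as [Hn|Hn].
  - exists (-1). rewrite Rabs_left by auto. repeat split; auto; field; lra.
  - exists 1. rewrite Rabs_right by lra. repeat split; auto; field; lra.
Qed.

Lemma root_iff_char_system (a tau m phi sg : R) (w z : C) :
  0 < tau -> sg = 1 \/ sg = -1 -> Re w = m * cos phi -> Im w = sg * (m * sin phi) ->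
  Cplus (Cplus z (RtoC a)) (Copp (Cmult w (Cexp (Cmult (RtoC (- tau)) z)))) = RtoC 0 <->
  char_system phi (tau * a) (tau * m) (tau * Re z) (sg * (tau * Im z)).
Proof.
  intros Htau Hsg Hwx Hwy. destruct z as [zx zy], w as [wx wy].
  unfold Re, Im in *; simpl in *. subst wx wy.
  unfold Cplus, Copp, Cmult, Cexp, RtoC, Re, Im, char_system; simpl.
  replace (- tau * zx - 0 * zy) with (- (tau * zx)) by ring.
  replace (- tau * zy + 0 * zx) with (- (tau * zy)) by ring.
  rewrite cos_neg, sin_neg.
  destruct (cos_sin_sub_signed sg phi (tau * zy) Hsg) as [-> ->].
  set (e := exp (- (tau * zx))). set (c := cos phi). set (s := sin phi).
  set (C1 := cos (tau * zy)). set (S1 := sin (tau * zy)).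
  assert (Hsg2 : sg * sg = 1) by (destruct Hsg as [-> | ->]; ring).
  split.
  - intro H. injection H as H1 H2. split.
    + transitivity (tau * (zx + a)); [ring|].
      replace (zx + a) with (m * c * (e * C1) + sg * (m * s) * (e * S1)) by lra. ring.
    + replace zy with (- (m * c * (e * S1)) + sg * (m * s) * (e * C1)) by lra.
      transitivity (tau * m * e * (sg * sg * s * C1 - sg * (c * S1))); [ring|].
      rewrite Hsg2. ring.
  - intros [H1 H2]. f_equal; apply (Rmult_eq_reg_l tau); try lra.
    transitivity (sg * (sg * (tau * zy) - tau * m * e * (s * C1 - sg * (c * S1)))
                  + (1 - sg * sg) * (tau * zy + tau * m * e * c * S1)); [ring|].
    rewrite Hsg2, H2. ring.
Qed.

Lemma stability_region_scaled phi tau a m : 0 < tau ->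
  stability_region phi (tau * a) (tau * m) <->
  ((0 <= a /\ m < / tau * Rfun2 (- tau * a) phi) \/
   (- / tau * Mphi phi < a < 0 /\
    / tau * Rfun1 (- tau * a) phi < m < / tau * Rfun2 (- tau * a) phi)).
Proof.
  intro Htau. unfold stability_region.
  replace (- tau * a) with (- (tau * a)) by ring.
  assert (Hinv : 0 < / tau) by (apply Rinv_0_lt_compat; lra).
  assert (E1 : forall u v, u < tau * v <-> / tau * u < v).
  { intros u v. split; intro H.
    - apply Rmult_lt_reg_l with tau; auto. field_simplify; lra.
    - apply Rmult_lt_reg_l with (/ tau); auto. field_simplify; lra. }
  assert (E2 : forall u v, tau * v < u <-> v < / tau * u).
  { intros u v. split; intro H.
    - apply Rmult_lt_reg_l with tau; auto. field_simplify; lra.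
    - apply Rmult_lt_reg_l with (/ tau); auto. field_simplify; lra. }
  assert (E3 : 0 <= tau * a <-> 0 <= a) by (split; intro; nra).
  assert (E4 : tau * a < 0 <-> a < 0) by (split; intro; nra).
  assert (E5 : - Mphi phi < tau * a <-> - / tau * Mphi phi < a).
  { replace (- / tau * Mphi phi) with (/ tau * (- Mphi phi)) by ring. apply E1. }
  rewrite E3, E4, E5, !E1, !E2. tauto.
Qed.

Theorem mainTheorem16 (a : R) (w : C) (tau : R) :
  Im w <> 0 ->
  PI / 2 < Rabs (Arg w) < PI ->
  0 < tau ->
  let phi := Rabs (Arg w) in
  (forall z : C,
      Cplus (Cplus z (RtoC a)) (Copp (Cmult w (Cexp (Cmult (RtoC (- tau)) z)))) = RtoC 0 ->
      Re z < 0)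
  <->
  ((0 <= a /\ Cmod w < / tau * Rfun2 (- tau * a) phi) \/
   (- / tau * Mphi phi < a < 0 /\
    / tau * Rfun1 (- tau * a) phi < Cmod w < / tau * Rfun2 (- tau * a) phi)).
Proof.
  intros Hw Hphi Htau phi.
  destruct (polar_form w Hw) as [sg [Hsg [Hm [Hwx Hwy]]]]. fold phi in Hphi, Hwx, Hwy.
  assert (Hroot := fun z => root_iff_char_system a tau (Cmod w) phi sg w z Htau Hsg Hwx Hwy).
  assert (Hr : 0 < tau * Cmod w) by nra.
  rewrite <- (stability_region_scaled phi tau a (Cmod w) Htau). split.
  - intro Hstable. apply NNPP. intro Hout.
    destruct (char_system_unstable phi Hphi _ _ Hr Hout) as [X [t [HX Hsys]]].
    set (z := (X / tau, sg * t / tau) : C).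
    assert (Hz : Re z = X / tau) by reflexivity.
    replace X with (tau * Re z) in Hsys by (rewrite Hz; field; lra).
    replace t with (sg * (tau * Im z)) in Hsys
      by (unfold z, Im; simpl; destruct Hsg as [-> | ->]; field; lra).
    apply Hroot, Hstable in Hsys.
    assert (0 <= X / tau) by (apply Rdiv_le_0_compat; lra). lra.
  - intros Hreg z Hz. apply Hroot in Hz.
    assert (HX := char_system_stable phi Hphi _ _ _ _ Hr Hreg Hz). nra.
Qed.
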